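(* Let $\mathcal{H}$ be a Hilbert space and $T\in\mathcal{B}(\mathcal{H})$ a convex operator, i.e. $T^{*2}T^2-2T^*T+I\ge0$, satisfying $$c:=\sup_{n\ge0}\frac{\|T^n\|^2}{n+1}<\infty.$$ Let $\Delta=\frac12T^{*2}T^2-T^*T+\frac12 I$ (a positive operator) and let $T_1$ on $\mathcal{H}_1=\mathcal{H}\oplus\mathcal{H}$ be given by the block matrix $$T_1=\begin{pmatrix}T&0\\ \Delta^{1/2}&0\end{pmatrix}.$$ Then: (i) $\|T_1^nh\|^2=\frac12\big(\|T^{n+1}h\|^2+\|T^{n-1}h\|^2\big)$ for all $h\in\mathcal{H}\cong\mathcal{H}\oplus\{0\}$ and all $n\ge1$; (ii) $\|T_1^n\|^2\le c(n+1)$ for all $n\ge0$; (iii) $T_1$ is convex. *)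

From HB Require Import structures.
From mathcomp Require Import all_boot all_order all_algebra.
From mathcomp Require Import complex.
From mathcomp Require Import boolp classical_sets reals.
Set Implicit Arguments. Unset Strict Implicit. Unset Printing Implicit Defensive.
Import Order.TTheory GRing.Theory Num.Theory.
Local Open Scope ring_scope.
Local Open Scope classical_set_scope.

Section Hilbert.
Variables (R : realType) (H : lmodType R[i]) (ip : H -> H -> R[i]).

Definition nsq (x : H) : R := complex.Re (ip x x).
Definition nrm (x : H) : R := Num.sqrt (nsq x).

Definition is_inner_product : Prop :=
  [/\ (forall (a : R[i]) x y z, ip (a *: x + y) z = a * ip x z + ip y z),
      (forall x y, ip y x = (ip x y)^*),
      (forall x, 0 <= ip x x) &
      (forall x, ip x x = 0 -> x = 0)].

Definition complete_ip : Prop :=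
  forall u : nat -> H,
    (forall e : R, 0 < e -> exists N : nat, forall m n, (N <= m)%N -> (N <= n)%N ->
        nrm (u m - u n) < e) ->
    exists l : H, forall e : R, 0 < e -> exists N : nat, forall n, (N <= n)%N ->
        nrm (u n - l) < e.

Definition is_hilbert : Prop := is_inner_product /\ complete_ip.

Definition bounded_op (A : H -> H) : Prop :=
  exists K : R, forall x, nrm (A x) <= K * nrm x.

Definition is_bounded_linear (A : H -> H) : Prop := linear A /\ bounded_op A.

Definition opnorm (A : H -> H) : R := sup [set nrm (A x) | x in [set x | nrm x <= 1]].

Definition adjoint (A As : H -> H) : Prop := forall x y, ip (A x) y = ip x (As y).

Definition posop (A : H -> H) : Prop := forall h, 0 <= ip (A h) h.

Definition convex_op (T Ts : H -> H) : Prop :=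
  posop (fun h => Ts (Ts (T (T h))) - (Ts (T h)) *+ 2 + h).

End Hilbert.

Definition ip_sum (R : realType) (H : lmodType R[i]) (ip : H -> H -> R[i])
  (u v : H * H) : R[i] := ip u.1 v.1 + ip u.2 v.2.

Definition Delta (R : realType) (H : lmodType R[i]) (T Ts : H -> H) (h : H) : H :=
  2^-1 *: Ts (Ts (T (T h))) - Ts (T h) + 2^-1 *: h.

(* T1 = [[T, 0], [D, 0]] on H (+) H, where D plays the role of Delta^{1/2} *)
Definition T1op (R : realType) (H : lmodType R[i]) (T D : H -> H) (u : H * H) : H * H :=
  (T u.1, D u.1).

From HB Require Import structures.
From mathcomp Require Import all_boot all_order all_algebra.
From mathcomp Require Import complex.
From mathcomp Require Import boolp classical_sets reals.
From mathcomp Require Import lra.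
Set Implicit Arguments. Unset Strict Implicit. Unset Printing Implicit Defensive.
Import Order.TTheory GRing.Theory Num.Theory.
Local Open Scope ring_scope.
Local Open Scope classical_set_scope.

(* Everything reduces to the norm identity
     ||D g||^2 = 1/2 ||T^2 g||^2 - ||T g||^2 + 1/2 ||g||^2,
   i.e. <D^2 g, g> = <Delta g, g>.  Since T1^(n+1) (a, b) = (T^(n+1) a, D T^n a),
   it gives ||T1^(n+1) u||^2 = 1/2 (||T^(n+2) a||^2 + ||T^n a||^2), whence (i) and,
   averaging the bounds c (n+3) and c (n+1), also (ii).  For (iii), the convexity
   form of T1 at (a, b) evaluates to 1/2 of the convexity form of T at T a,
   plus ||b||^2. *)

Section InnerProduct.
Local Open Scope complex_scope.
Variables (R : realType) (H : lmodType R[i]) (ip : H -> H -> R[i]).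
Hypothesis hip : is_inner_product ip.

Lemma ipDl x y z : ip (x + y) z = ip x z + ip y z.
Proof. by case: hip => ipDZ _ _ _; have := ipDZ 1 x y z; rewrite scale1r mul1r. Qed.

Lemma ip0l z : ip 0 z = 0.
Proof. by apply/(addrI (ip 0 z)); rewrite -ipDl !addr0. Qed.

Lemma ipZl a x z : ip (a *: x) z = a * ip x z.
Proof. by case: hip => ipDZ _ _ _; rewrite -[a *: x]addr0 ipDZ ip0l addr0. Qed.

Lemma ipBl x y z : ip (x - y) z = ip x z - ip y z.
Proof. by rewrite ipDl -scaleN1r ipZl mulN1r. Qed.

Lemma ipMn2l x z : ip (x *+ 2) z = ip x z *+ 2.
Proof. by rewrite !mulr2n ipDl. Qed.

Lemma ipC x y : ip y x = (ip x y)^*.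
Proof. by case: hip. Qed.

Lemma ipxx x : ip x x = (nsq ip x)%:C.
Proof. by case: hip => _ _ ip_ge0 _; rewrite /nsq RRe_real // ger0_real. Qed.

Lemma adjoint_ipl {A As : H -> H} :
  adjoint ip A As -> forall x y, ip (As y) x = ip y (A x).
Proof. by move=> hA x y; rewrite ipC -hA -ipC. Qed.

Lemma nsq_ge0 x : 0 <= nsq ip x.
Proof. by case: hip => _ _ ip_ge0 _; rewrite -ler0c -ipxx. Qed.

Lemma nsq_eq0 x : nsq ip x = 0 -> x = 0.
Proof. by case: hip => _ _ _ ip_eq0 x0; apply: ip_eq0; rewrite ipxx x0. Qed.

Lemma nsqZ (r : R) x : nsq ip (r%:C *: x) = r ^+ 2 * nsq ip x.
Proof. by rewrite /nsq ipZl ipC ipZl ipxx -rmorphM conjc_real -rmorphM /= mulrA -expr2. Qed.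

Lemma nrm_ge0 x : 0 <= nrm ip x.
Proof. exact: sqrtr_ge0. Qed.

Lemma nrm0 : nrm ip 0 = 0.
Proof. by rewrite /nrm /nsq ip0l sqrtr0. Qed.

Lemma sqr_nrm x : nrm ip x ^+ 2 = nsq ip x.
Proof. by rewrite sqr_sqrtr // nsq_ge0. Qed.

Lemma nrmZ (r : R) x : 0 <= r -> nrm ip (r%:C *: x) = r * nrm ip x.
Proof. by move=> r0; rewrite /nrm nsqZ sqrtrM ?sqr_ge0 // sqrtr_sqr ger0_norm. Qed.

Lemma linear_fun0 (A : H -> H) : linear A -> A 0 = 0.
Proof.
move=> hA; apply/(addrI (A 0)); have := hA 1 0 0.
by rewrite !scale1r !addr0 => h; rewrite -h.
Qed.

Lemma linear_funZ (A : H -> H) : linear A -> forall a x, A (a *: x) = a *: A x.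
Proof. by move=> hA a x; rewrite -[a *: x]addr0 hA linear_fun0 // addr0. Qed.

Lemma is_bounded_linear_iter A k :
  is_bounded_linear ip A -> is_bounded_linear ip (iter k A).
Proof.
case=> linA [K hK]; elim: k => [|k [linAk [Kk hKk]]].
  by split=> [a u v //|]; exists 1 => x; rewrite mul1r.
split=> [a u v /=|]; first by rewrite linAk linA.
exists (`|K| * Kk) => x /=; rewrite -mulrA.
apply: (le_trans (hK _)); apply: (le_trans (ler_wpM2r (nrm_ge0 _) (ler_norm K))).
exact: ler_wpM2l.
Qed.

Lemma opnorm_sqr_le A k : 0 <= k -> (forall x, nsq ip (A x) <= k * nsq ip x) ->
  opnorm ip A ^+ 2 <= k.
Proof.
move=> k0 hA; rewrite /opnorm; set S := [set nrm ip (A x) | x in _].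
have S0 : S (nrm ip (A 0)) by exists 0 => //=; rewrite nrm0.
have ubS : ubound S (Num.sqrt k).
  move=> _ [x /= x1 <-]; rewrite /nrm ler_sqrt //.
  apply: (le_trans (hA x)); rewrite -[X in _ <= X]mulr1 ler_wpM2l //.
  by rewrite -sqr_nrm expr_le1 ?nrm_ge0.
have sup_ge0 : 0 <= sup S.
  apply: le_trans (nrm_ge0 (A 0)) _; apply: sup_upper_bound => //.
  by split; [exists (nrm ip (A 0)) | exists (Num.sqrt k)].
rewrite -(sqr_sqrtr k0) lerXn2r ?nnegrE ?sqrtr_ge0 //.
by apply: ge_sup ubS; exists (nrm ip (A 0)).
Qed.

Lemma nsq_le_opnorm A : is_bounded_linear ip A ->
  forall x, nsq ip (A x) <= opnorm ip A ^+ 2 * nsq ip x.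
Proof.
case=> linA [K hK] x; set S := [set nrm ip (A y) | y in [set y | nrm ip y <= 1]].
have [x0|xn0] := eqVneq (nsq ip x) 0.
  by rewrite (nsq_eq0 x0) linear_fun0 // /nsq ip0l mulr0.
have s0 : 0 < nrm ip x by rewrite sqrtr_gt0 lt_def xn0 nsq_ge0.
have hS : has_sup S.
  split; first by exists (nrm ip (A 0)), 0 => //=; rewrite nrm0.
  exists `|K| => _ [y /= y1 <-]; apply: (le_trans (hK y)).
  apply: (le_trans (ler_wpM2r (nrm_ge0 _) (ler_norm K))).
  by rewrite -[X in _ <= X]mulr1 ler_wpM2l.
have nrm_unit : nrm ip ((nrm ip x)^-1%:C *: x) = 1.
  by rewrite nrmZ ?invr_ge0 ?(ltW s0) // mulVf // gt_eqF.
have : nrm ip (A ((nrm ip x)^-1%:C *: x)) <= opnorm ip A.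
  by apply: sup_upper_bound => //; exists ((nrm ip x)^-1%:C *: x); rewrite /= ?nrm_unit.
rewrite linear_funZ // nrmZ ?invr_ge0 ?(ltW s0) // mulrC ler_pdivrMr // => hAx.
rewrite -!sqr_nrm -exprMn lerXn2r ?nnegrE ?nrm_ge0 //; exact: le_trans (nrm_ge0 _) hAx.
Qed.

Lemma convex_opE A As : adjoint ip A As ->
  convex_op ip A As <-> forall u, 0 <= nsq ip (A (A u)) - 2 * nsq ip (A u) + nsq ip u.
Proof.
move=> hA; have form u : ip (As (As (A (A u))) - As (A u) *+ 2 + u) u =
    (nsq ip (A (A u)) - 2 * nsq ip (A u) + nsq ip u)%:C.
  rewrite ipDl ipBl ipMn2l !(adjoint_ipl hA) !ipxx.
  by rewrite rmorphD rmorphB rmorphM rmorph_nat mulr_natl.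
by split=> h u; [rewrite -ler0c -form; exact: h | rewrite /posop form ler0c].
Qed.

End InnerProduct.

Lemma nsq_ip_sum (R : realType) (H : lmodType R[i]) (ip : H -> H -> R[i]) p q :
  nsq (ip_sum ip) (p, q) = nsq ip p + nsq ip q.
Proof. by rewrite /nsq /ip_sum; case: (ip p p) (ip q q) => ? ? []. Qed.

Lemma is_inner_product_sum (R : realType) (H : lmodType R[i]) (ip : H -> H -> R[i]) :
  is_inner_product ip -> is_inner_product (ip_sum ip).
Proof.
move=> hip; case: (hip) => ipDZ ipC ip_ge0 ip_eq0; split.
- by move=> a x y z; rewrite /ip_sum /= !ipDZ mulrDr addrACA.
- by move=> [x1 x2] [y1 y2]; rewrite /ip_sum /= rmorphD (ipC x1) (ipC x2).
- by move=> x; rewrite /ip_sum addr_ge0.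
- move=> [x1 x2] /eqP; rewrite /ip_sum /= paddr_eq0 // => /andP[/eqP x10 /eqP x20].
  by rewrite (ip_eq0 _ x10) (ip_eq0 _ x20).
Qed.

Lemma iterS_T1op (R : realType) (H : lmodType R[i]) (T D : H -> H) n u :
  iter n.+1 (T1op T D) u = (iter n.+1 T u.1, D (iter n T u.1)).
Proof.
have iter_fst k v : (iter k (T1op T D) v).1 = iter k T v.1.
  by elim: k => //= k IH; rewrite IH.
by rewrite iterS /T1op iter_fst.
Qed.

Section ConvexDilation.
Variables (R : realType) (H : lmodType R[i]) (ip : H -> H -> R[i]).
Hypothesis hip : is_inner_product ip.
Variables (T Ts D : H -> H).
Hypotheses (hTs : adjoint ip T Ts) (hDsa : adjoint ip D D).
Hypothesis hDD : forall h, D (D h) = Delta T Ts h.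

Local Notation T1 := (T1op T D).
Local Notation ip1 := (ip_sum ip).

Lemma nsq_D g :
  nsq ip (D g) = 2^-1 * nsq ip (T (T g)) - nsq ip (T g) + 2^-1 * nsq ip g.
Proof.
apply: complexI; rewrite -(ipxx hip) -(adjoint_ipl hip hDsa) hDD /Delta.
rewrite (ipDl hip) (ipBl hip) !(ipZl hip) !(adjoint_ipl hip hTs) !(ipxx hip).
by rewrite rmorphD rmorphB !rmorphM fmorphV rmorph_nat.
Qed.

Lemma nsq_iterS_T1op n u : nsq ip1 (iter n.+1 T1 u) =
  2^-1 * (nsq ip (iter n.+2 T u.1) + nsq ip (iter n T u.1)).
Proof. by rewrite iterS_T1op nsq_ip_sum nsq_D /=; lra. Qed.

Lemma nsq_iter_T1op_le (c : R) n u : 0 <= c ->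
  (forall k x, nsq ip (iter k T x) <= c * k.+1%:R * nsq ip x) ->
  nsq ip1 (iter n T1 u) <= c * n.+1%:R * nsq ip1 u.
Proof.
case: u => a b c0 hT; rewrite nsq_ip_sum.
case: n => [|n].
  by rewrite /= nsq_ip_sum mulrDr lerD ?(hT 0%N).
rewrite nsq_iterS_T1op /=; have := hT n.+2 a; have := hT n a.
have := mulr_ge0 (mulr_ge0 c0 (ler0n R n.+2)) (nsq_ge0 hip b).
by rewrite /= -[n.+3]addn3 -[n.+2]addn2 -[n.+1]addn1 !natrD; lra.
Qed.

Lemma convex_op_T1op T1s : convex_op ip T Ts -> adjoint ip1 T1 T1s -> convex_op ip1 T1 T1s.
Proof.
move=> /(convex_opE hip hTs) convT hT1s.
apply/(convex_opE (is_inner_product_sum hip) hT1s) => -[a b].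
rewrite /T1op /= !nsq_ip_sum !nsq_D; have := convT (T a); have := nsq_ge0 hip b.
by lra.
Qed.

End ConvexDilation.

Lemma opnorm_iter_sqr_le_sup (R : realType) (H : lmodType R[i]) (ip : H -> H -> R[i]) T :
  let S := [set opnorm ip (iter n T) ^+ 2 / n.+1%:R | n in [set: nat]] in
  has_ubound S -> forall k, opnorm ip (iter k T) ^+ 2 <= sup S * k.+1%:R.
Proof.
move=> S hS k; rewrite -ler_pdivrMr ?ltr0Sn //.
by apply: sup_upper_bound; [split=> //; exists (opnorm ip T ^+ 2 / 2%:R), 1%N | exists k].
Qed.

Theorem lemma3p1 (R : realType) (H : lmodType R[i]) (ip : H -> H -> R[i])
  (hH : is_hilbert ip)
  (T Ts : H -> H) (hT : is_bounded_linear ip T) (hTs : adjoint ip T Ts)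
  (hconv : convex_op ip T Ts)
  (hc : has_ubound [set (opnorm ip (iter n T)) ^+ 2 / n.+1%:R | n in [set: nat]])
  (D : H -> H) (hD : is_bounded_linear ip D) (hDsa : adjoint ip D D)
  (hDpos : posop ip D) (hDD : forall h, D (D h) = Delta T Ts h) :
  let c := sup [set (opnorm ip (iter n T)) ^+ 2 / n.+1%:R | n in [set: nat]] in
  let T1 := T1op T D in
  let ip1 := ip_sum ip in
  (forall (n : nat) (h : H), (1 <= n)%N ->
      nsq ip1 (iter n T1 (h, 0)) =
      2^-1 * (nsq ip (iter n.+1 T h) + nsq ip (iter n.-1 T h)))
  /\ (forall n : nat, (opnorm ip1 (iter n T1)) ^+ 2 <= c * n.+1%:R)
  /\ (forall T1s : H * H -> H * H, adjoint ip1 T1 T1s -> convex_op ip1 T1 T1s).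
Proof.
move=> c T1 ip1; have hip := hH.1.
have opT := opnorm_iter_sqr_le_sup hc.
have c0 : 0 <= c by have := le_trans (sqr_ge0 _) (opT 0%N); rewrite mulr1.
have nsqT k x : nsq ip (iter k T x) <= c * k.+1%:R * nsq ip x.
  apply: le_trans (nsq_le_opnorm hip (is_bounded_linear_iter k hT) x) _.
  by rewrite ler_wpM2r ?nsq_ge0 ?opT.
split; first by case=> // n h _; rewrite (nsq_iterS_T1op hip hTs hDsa hDD).
split; last by move=> T1s; exact: (convex_op_T1op hip hTs hDsa hDD hconv).
move=> n; apply: (opnorm_sqr_le (is_inner_product_sum hip)) => [|u].
  by rewrite mulr_ge0.
exact: (nsq_iter_T1op_le hip hTs hDsa hDD n u c0 nsqT).
Qed.
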